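(* Let $w$ be a packed word of length $n$, viewed as a map $w:[n]\to\mathbb{N}$. Define the double poset $P_w=([n],\leq_1,\leq_2)$ by $$i\leq_1 j \iff (i\geq j \text{ and } w(i)\leq w(j)),\qquad i\leq_2 j\iff (i\leq j\text{ and } w(i)\leq w(j)).$$ Then $P_w$ is a weak plane poset, and its total quasi-order $\preceq$ (given by $i\preceq j\iff (i\leq_1 j$ or $i\leq_2 j)$) is the total quasi-order associated to $w$, namely $i\preceq j \iff w(i)\leq w(j)$.
   Context: A packed word of length $n$ is a word $w(1)\cdots w(n)$ of positive integers whose set of letters is $\{1,\dots,k\}$ for some $k$ (equivalently, a surjection $[n]\to[k]$). A double poset is a finite set with two partial orders $\leq_1,\leq_2$. A weak plane poset is a double poset such that (1) $x\leq_1 y$ and $x\leq_2 y$ imply $x=y$, and (2) the relation $x\preceq y \iff (x\leq_1 y$ or $x\leq_2 y)$ is a total quasi-order (reflexive, transitive, all elements comparable, not necessarily antisymmetric). Total quasi-orders on $[n]$ are in bijection with packed words of length $n$: to a total quasi-order one associates the packed word $w$ with $w(i)\leq w(j)\iff i\preceq j$ (the $r$-th equivalence class, in increasing order, gives the positions of the letter $r$). *)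

From mathcomp Require Import all_boot.
Set Implicit Arguments. Unset Strict Implicit. Unset Printing Implicit Defensive.

Definition packed_word (n : nat) (w : 'I_n -> nat) : Prop :=
  exists k : nat, forall m : nat, (exists i : 'I_n, w i = m) <-> (1 <= m <= k).

Definition partial_order (T : eqType) (R : rel T) : Prop :=
  [/\ reflexive R, antisymmetric R & transitive R].

Definition total_quasi_order (T : eqType) (R : rel T) : Prop :=
  [/\ reflexive R, transitive R & total R].

Definition double_poset (T : finType) (le1 le2 : rel T) : Prop :=
  partial_order le1 /\ partial_order le2.

Definition dp_union (T : eqType) (le1 le2 : rel T) : rel T :=
  fun x y => le1 x y || le2 x y.

Definition weak_plane_poset (T : finType) (le1 le2 : rel T) : Prop :=
  [/\ double_poset le1 le2,
      (forall x y, le1 x y -> le2 x y -> x = y)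
    & total_quasi_order (dp_union le1 le2)].

Definition Pw_le1 (n : nat) (w : 'I_n -> nat) : rel 'I_n :=
  fun i j => (j <= i) && (w i <= w j).
Definition Pw_le2 (n : nat) (w : 'I_n -> nat) : rel 'I_n :=
  fun i j => (i <= j) && (w i <= w j).

(* Both orders of P_w refine the preorder i, j |-> w i <= w j by a linear order
   on positions (decreasing for <=_1, increasing for <=_2).  Intersecting a
   preorder with a partial order gives a partial order; the two position orders
   only agree on the diagonal; and since any two positions are comparable in one
   of them, the union of <=_1 and <=_2 is exactly the preorder induced by w. *)
From mathcomp Require Import all_boot.

Set Implicit Arguments.
Unset Strict Implicit.
Unset Printing Implicit Defensive.

Lemma partial_order_converse (T : eqType) (R : rel T) :
  partial_order R -> partial_order (fun x y => R y x).
Proof.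
case=> R_refl R_anti R_trans; split=> //.
- by move=> x y; rewrite andbC => /R_anti.
- by move=> y x z Ryx Rzy; apply: R_trans Ryx.
Qed.

Lemma partial_order_andb (T : eqType) (R S : rel T) :
  partial_order R -> reflexive S -> transitive S ->
  partial_order (fun x y => R x y && S x y).
Proof.
case=> R_refl R_anti R_trans S_refl S_trans; split.
- by move=> x; rewrite R_refl S_refl.
- by move=> x y /andP[/andP[Rxy _] /andP[Ryx _]]; apply: R_anti; rewrite Rxy Ryx.
- move=> y x z /andP[Rxy Sxy] /andP[Ryz Syz].
  by rewrite (R_trans _ _ _ Rxy Ryz) (S_trans _ _ _ Sxy Syz).
Qed.

Lemma total_quasi_order_leq_comp (T : eqType) (f : T -> nat) :
  total_quasi_order (fun x y => f x <= f y).
Proof.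
split=> [x | y x z | x y]; [exact: leqnn | exact: leq_trans | exact: leq_total].
Qed.

Lemma partial_order_leq_ord (n : nat) : partial_order (fun i j : 'I_n => i <= j).
Proof.
split=> [i | i j /anti_leq/val_inj // | j i k]; [exact: leqnn | exact: leq_trans].
Qed.

Section DoublePosetOfWord.

Variables (n : nat) (w : 'I_n -> nat).

Lemma Pw_le1_partial_order : partial_order (Pw_le1 w).
Proof.
have [w_refl w_trans _] := total_quasi_order_leq_comp w.
exact: (partial_order_andb (partial_order_converse (partial_order_leq_ord n))
                           w_refl w_trans).
Qed.

Lemma Pw_le2_partial_order : partial_order (Pw_le2 w).
Proof.
have [w_refl w_trans _] := total_quasi_order_leq_comp w.
exact: (partial_order_andb (partial_order_leq_ord n) w_refl w_trans).
Qed.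

Lemma Pw_le1_le2_eq (i j : 'I_n) : Pw_le1 w i j -> Pw_le2 w i j -> i = j.
Proof. by case/andP=> le_ji _ /andP[le_ij _]; apply/val_inj/anti_leq/andP. Qed.

Lemma dp_union_Pw (i j : 'I_n) :
  dp_union (Pw_le1 w) (Pw_le2 w) i j = (w i <= w j).
Proof. by rewrite /dp_union /Pw_le1 /Pw_le2 -andb_orl leq_total. Qed.

End DoublePosetOfWord.

Theorem mainTheorem2 (n : nat) (w : 'I_n -> nat) :
  packed_word w ->
  weak_plane_poset (Pw_le1 w) (Pw_le2 w) /\
  (forall i j : 'I_n, dp_union (Pw_le1 w) (Pw_le2 w) i j = (w i <= w j)).
Proof.
move=> _; split; last exact: dp_union_Pw.
split.
- exact: (conj (Pw_le1_partial_order w) (Pw_le2_partial_order w)).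
- exact: Pw_le1_le2_eq.
- have [refl trans tot] := total_quasi_order_leq_comp w.
  split=> [i | j i k | i j]; rewrite !dp_union_Pw;
    [exact: refl | exact: trans | exact: tot].
Qed.
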